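(* Let $n\ge 3$ and let $k\in[1..n-2]$ be coprime to $n$. Then there are exactly three strings $\mathsf{T}$ of length $n$ over $\{\mathtt{a},\mathtt{b}\}$ ($\mathtt{a}<\mathtt{b}$) whose suffix array $\mathsf{SA}_{\mathsf{T}}=[p_1,\ldots,p_n]$ is an arithmetically progressed permutation with ratio $k$. Each such $\mathsf{T}$ has the form $\mathsf{T}[i]=\mathtt{a}$ if $i\in\{p_1,\ldots,p_s\}$ and $\mathsf{T}[i]=\mathtt{b}$ otherwise, for some $s\in[1..n-1]$ (so $p_s$ is the start of the lexicographically largest suffix beginning with $\mathtt{a}$), and the three strings are determined by: (1) $p_1=n$ and $p_s=n-k-1$; (2) $p_1=k+1$ and $p_s=n-k$; (3) $p_1=1$ and $p_s=n-k$. The strings in cases (1) and (2) have period $n-k$, and the string in case (3) is a Lyndon word.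
   Context: Lexicographic order with a proper prefix smaller than the longer string; suffix array $\mathsf{SA}_{\mathsf{T}}$: permutation of $[1..n]$ such that $\mathsf{T}[\mathsf{SA}_{\mathsf{T}}[i]..n]$ is the $i$-th smallest suffix. $x\bmod n$ denotes the representative of $x$ modulo $n$ in $[1..n]$. An arithmetically progressed permutation of length $n$ with ratio $k\in[1..n-1]$ is a permutation $P=[p_1,\ldots,p_n]$ of $[1..n]$ with $p_{i+1}=p_i+k\bmod n$. A string $\mathsf{T}$ of length $n$ has period $p\in[1..n-1]$ if $\mathsf{T}[i]=\mathsf{T}[i+p]$ for all $i\in[1..n-p]$. A Lyndon word is a string that is strictly smaller in lexicographic order than all its other cyclic rotations. *)

From mathcomp Require Import all_boot.
Set Implicit Arguments. Unset Strict Implicit. Unset Printing Implicit Defensive.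

(* Strings over {a,b} are [seq bool]: a = false, b = true, so a < b.
   Positions are 1-based as in the paper: T[i] = nth false T i.-1. *)

Fixpoint lex_lt (s t : seq bool) : bool :=
  match s, t with
  | [::], [::] => false
  | [::], _ :: _ => true
  | _ :: _, [::] => false
  | x :: s', y :: t' => (~~ x && y) || ((x == y) && lex_lt s' t')
  end.

Definition suffix (T : seq bool) (i : nat) : seq bool := drop i.-1 T.

Definition is_SA (T : seq bool) (p : seq nat) : Prop :=
  perm_eq p (iota 1 (size T)) /\ sorted lex_lt [seq suffix T i | i <- p].

Definition modn1 (x n : nat) : nat := (x.-1 %% n).+1.

Definition is_APP (n k : nat) (p : seq nat) : Prop :=
  [/\ perm_eq p (iota 1 n), 1 <= k <= n.-1 &
      forall i, i.+1 < n -> nth 0 p i.+1 = modn1 (nth 0 p i + k) n].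

Definition has_period (T : seq bool) (q : nat) : Prop :=
  1 <= q <= (size T).-1 /\
  forall i, i + q < size T -> nth false T i = nth false T (i + q).

Definition lyndon (T : seq bool) : Prop :=
  forall r, 0 < r < size T -> lex_lt T (rot r T).

Definition ab_string (n : nat) (p : seq nat) (s : nat) : seq bool :=
  mkseq (fun i => i.+1 \notin take s p) n.

From Pilot Require Import Defs.
From mathcomp Require Import all_boot zify.

(* Let m be the inverse of k modulo n.  An arithmetically progressed
   permutation of ratio k is determined by its first entry c: its a-th entry
   (0-based) is app c a = ((c - 1 + a k) mod n) + 1, and position j sits at
   index rank c j = ((j - c) m) mod n.  Hence the suffix following position j
   has index rank c j + m (mod n).

   1. A general criterion (section SuccessorCriterion): p lists the suffixes
      of T in increasing order iff, for indices a < b, the first letters are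
      nondecreasing and, when they agree, the successor suffixes are ordered
      in the same way.
   2. Over {a, b} the first letters are then monotone along p, so T is the
      string ab_string n p s of the paper for some threshold s, and for such
      strings the criterion becomes an arithmetic condition on s and on the
      index nu of position n (sorted_threshold).  Its only solutions are
      (nu, s) = (0, n-m), (n-m-1, n-m-1), (n-m, n-m), and nu determines c,
      namely c = n, k+1, 1 (ab_SA_classification).
   3. For the three resulting strings we compute p_s, the period n - k
      (moving a position back by k lowers its index by one), the Lyndon
      property (T is its own smallest suffix), and we tell them apart by
      their first and last letters. *)

(* Defs.suffix is shadowed by the prefix/suffix predicate of seq. *)
Local Notation suffix := Defs.suffix.

Definition letter (T : seq bool) (j : nat) : bool := nth false T j.-1.

Lemma lex_nil_r s : lex_lt s [::] = false.
Proof. by case: s. Qed.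

Lemma lex_cons_same x s t : lex_lt (x :: s) (x :: t) = lex_lt s t.
Proof. by case: x. Qed.

Lemma lex_trans : transitive lex_lt.
Proof.
move=> t s u; elim: s t u => [|x s IH] [|y t] [|z u] //=.
by case: x y z => [] [] [] //=; exact: IH.
Qed.

Lemma lex_asym s t : lex_lt s t -> ~~ lex_lt t s.
Proof.
elim: s t => [|x s IH] [|y t] //=.
by case: x y => [] [] //=; exact: IH.
Qed.

Lemma lex_catr s t v : lex_lt s t -> size t <= size s -> lex_lt s (t ++ v).
Proof.
elim: s t => [|x s IH] [|y t] //=.
by case: x y => [] [] //= H Hs; exact: IH.
Qed.

Lemma suffix_cons T j : 0 < j <= size T -> suffix T j = letter T j :: suffix T j.+1.
Proof.
move=> Hj; rewrite /suffix (drop_nth false); last by lia.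
by congr (_ :: drop _ _); lia.
Qed.

Lemma suffix_past_end T : suffix T (size T).+1 = [::].
Proof. exact: drop_size. Qed.

Definition suffixes_sorted (T : seq bool) (p : seq nat) : Prop :=
  forall a b, a < b < size p -> lex_lt (suffix T (nth 0 p a)) (suffix T (nth 0 p b)).

Lemma sorted_suffixesP T p :
  sorted lex_lt [seq suffix T i | i <- p] <-> suffixes_sorted T p.
Proof.
rewrite sorted_pairwise; last exact: lex_trans.
split=> [/(pairwiseP [::]) H a b Hab | H].
  have [Ha Hb] : a < size p /\ b < size p by lia.
  have := H a b; rewrite size_map !(nth_map 0) //.
  by apply; rewrite ?inE //; case/andP: Hab.
apply/(pairwiseP [::]) => a b; rewrite size_map !inE => Ha Hb Hab.
by rewrite !(nth_map 0) //; apply: H; lia.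
Qed.

(* The suffix order is determined by first letters and by the
   order of the successor suffixes; position n has the empty successor. *)
Section SuccessorCriterion.
Variables (n : nat) (T : seq bool) (p : seq nat) (R : nat -> nat).
Hypothesis size_T : size T = n.
Hypothesis size_p : size p = n.
Hypothesis p_range : forall a, a < n -> 0 < nth 0 p a <= n.
Hypothesis R_p : forall a, a < n -> R (nth 0 p a) = a.
Hypothesis p_R : forall j, 0 < j <= n -> R j < n /\ nth 0 p (R j) = j.

Definition successor_condition : Prop :=
  forall a b, a < b < n ->
    (letter T (nth 0 p a) ==> letter T (nth 0 p b)) /\
    (letter T (nth 0 p a) = letter T (nth 0 p b) ->
       nth 0 p b <> n /\
       (nth 0 p a <> n -> R (nth 0 p a).+1 < R (nth 0 p b).+1)).

Lemma sorted_successor : suffixes_sorted T p -> successor_condition.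
Proof.
rewrite /suffixes_sorted size_p => sorted_p a b Hab.
have [Ha Hb] : a < n /\ b < n by lia.
have [Pa Pb] := (p_range a Ha, p_range b Hb).
have := sorted_p a b Hab.
rewrite (suffix_cons T (nth 0 p a)) ?size_T // (suffix_cons T (nth 0 p b)) ?size_T //.
move=> first_lt; split; first by move: first_lt; case: (letter T _) (letter T _) => [] [].
move=> Eab; move: first_lt; rewrite Eab lex_cons_same => next_lt.
have Pbn : nth 0 p b <> n.
  by move=> E; move: next_lt; rewrite E -size_T suffix_past_end lex_nil_r.
split=> // Pan.
have [Ra Ea] := p_R (nth 0 p a).+1 ltac:(lia).
have [Rb Eb] := p_R (nth 0 p b).+1 ltac:(lia).
case: (ltngtP (R (nth 0 p a).+1) (R (nth 0 p b).+1)) => // C.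
  have := sorted_p _ _ (introT andP (conj C Ra)).
  by rewrite Ea Eb => /lex_asym; rewrite next_lt.
have : nth 0 p a = nth 0 p b by apply: succn_inj; rewrite -Ea C Eb.
by move/(congr1 R); rewrite !R_p //; lia.
Qed.

(* Sufficiency, by induction on the length n - p_a of the smaller suffix. *)
Lemma successor_sorted : successor_condition -> suffixes_sorted T p.
Proof.
move=> succ_p; rewrite /suffixes_sorted size_p.
suff H : forall d a b, n - nth 0 p a < d -> a < b < n ->
    lex_lt (suffix T (nth 0 p a)) (suffix T (nth 0 p b)).
  by move=> a b Hab; apply: (H n.+1); lia.
elim=> [|d IH] a b Hd Hab; first by have := p_range a; lia.
have [Ha Hb] : a < n /\ b < n by lia.
have [Pa Pb] := (p_range a Ha, p_range b Hb).
have [letter_mono same_letter] := succ_p a b Hab.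
rewrite (suffix_cons T (nth 0 p a)) ?size_T // (suffix_cons T (nth 0 p b)) ?size_T //.
have [Eab|Nab] := eqVneq (letter T (nth 0 p a)) (letter T (nth 0 p b)); last first.
  by move: letter_mono Nab; case: (letter T _) (letter T _) => [] [].
rewrite Eab lex_cons_same; have [Pbn next_lt] := same_letter Eab.
have [Pan|Pan] := eqVneq (nth 0 p a) n.
  by rewrite Pan -size_T suffix_past_end (suffix_cons T (nth 0 p b).+1) //; lia.
have [Ra Ea] := p_R (nth 0 p a).+1 ltac:(lia).
have [Rb Eb] := p_R (nth 0 p b).+1 ltac:(lia).
rewrite -Ea -Eb; apply: IH; first by rewrite Ea; lia.
by rewrite Rb andbT; apply: next_lt; apply/eqP.
Qed.

Lemma sorted_successorP : suffixes_sorted T p <-> successor_condition.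
Proof. by split; [exact: sorted_successor | exact: successor_sorted]. Qed.

End SuccessorCriterion.

(* A string whose smallest suffix is the whole string is a Lyndon word:
   each rotation starts with a larger suffix, which is not a prefix of T. *)
Lemma lyndon_of_SA T p : is_SA T p -> nth 0 p 0 = 1 -> lyndon T.
Proof.
move=> [p_perm /sorted_suffixesP sorted_p] p0 r Hr.
have size_p : size p = size T by rewrite (perm_size p_perm) size_iota.
have r_in : r.+1 \in p by rewrite (perm_mem p_perm) mem_iota; lia.
have b_lt : index r.+1 p < size p by rewrite index_mem.
have b_gt0 : 0 < index r.+1 p.
  by rewrite lt0n; apply/eqP => b0; move: (nth_index 0 r_in); rewrite b0 p0; lia.
have := sorted_p 0 _ (introT andP (conj b_gt0 b_lt)); rewrite p0 nth_index //.
rewrite /suffix drop0 /= => T_lt; apply: lex_catr => //.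
by rewrite size_drop leq_subr.
Qed.

Lemma monotone_threshold n (g : nat -> bool) :
  (forall a b, a < b < n -> g a -> g b) ->
  exists s, forall a, a < n -> g a = (s <= a).
Proof.
elim: n => [|n IH] g_mono; first by exists 0.
have [s Hs] : exists s, forall a, a < n -> g a = (s <= a).
  by apply: IH => a b Hab; apply: g_mono; lia.
case gn: (g n).
  exists (minn s n) => a Ha; have [Han|->] : a < n \/ a = n by lia.
    by rewrite Hs //; apply/idP/idP; lia.
  by rewrite gn; apply/esym; lia.
exists n.+1 => a Ha; have [Han|->] : a < n \/ a = n by lia.
  have -> : (n.+1 <= a) = false by lia.
  by apply/negP => ga; move: (g_mono a n ltac:(lia) ga); rewrite gn.
by rewrite gn; lia.
Qed.

(* The arithmetic form of the successor criterion for a threshold string: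
   indices a < b on the same side of the threshold s must have ordered
   successor indices (index + m mod n), the index nu of position n (whose
   successor suffix is empty) being smallest on its side. *)
Definition sorted_threshold (n m s nu : nat) : Prop :=
  forall a b, a < b < n -> (s <= a) = (s <= b) ->
    b <> nu /\ (a <> nu -> (a + m) %% n < (b + m) %% n).

Lemma addn_mod_lt n m a b : a < b < n -> m < n -> (b < n - m \/ n - m <= a) ->
  (a + m) %% n < (b + m) %% n.
Proof.
move=> Hab Hm [H|H]; first by rewrite !modn_small; lia.
rewrite (_ : a + m = (a + m - n) + n) 1?(_ : b + m = (b + m - n) + n); try lia.
by rewrite !modnDr !modn_small; lia.
Qed.

(* The three solutions of sorted_threshold.  The pair (nu - 1, nu) forces
   nu = 0 or s = nu; the pair (n-m-1, n-m), which wraps around, forces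
   s = n - m or nu = n - m - 1. *)
Lemma sorted_thresholdP n m s nu : nu < n -> 0 < m <= n - 2 ->
  sorted_threshold n m s nu <->
  [\/ nu = 0 /\ s = n - m, nu = n - m - 1 /\ s = n - m - 1 | nu = n - m /\ s = n - m].
Proof.
move=> Hnu Hm; split=> [Hst | Hcases a b Hab Es].
  have nu_block : nu = 0 \/ s = nu.
    case: (posnP nu) => [|nu_gt0]; [by left | right; apply/eqP; apply: contraT => Hs].
    by have [] := Hst nu.-1 nu ltac:(lia) ltac:(apply/idP/idP; lia).
  have wrap_block : s = n - m \/ nu = n - m - 1.
    have [|Hs] := eqVneq s (n - m); [by left | right; apply/eqP; apply: contraT => Hnu'].
    have [_ H] := Hst (n - m - 1) (n - m) ltac:(lia) ltac:(apply/idP/idP; lia).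
    have := H ltac:(lia).
    rewrite (_ : n - m - 1 + m = n - 1); last lia.
    by rewrite (_ : n - m + m = n) ?modnn ?modn_small; lia.
  case: nu_block wrap_block => [-> [->|]|-> [->|->]]; try lia.
  - by constructor 1.
  - by constructor 3.
  - by constructor 2.
have blocks : b < s \/ s <= a.
  by case: (leqP s a) => Ha; [right | left; move: Es; rewrite leqNgt Ha /=; lia].
move: blocks; case: Hcases => [[-> ->]|[-> ->]|[-> ->]] blocks.
all: by split=> [|Ha]; [lia | apply: addn_mod_lt; lia].
Qed.

Section ArithmeticProgression.
Variables (n k m : nat).
Hypothesis n_gt1 : 1 < n.
Hypothesis mk_inv : (m * k) %% n = 1.

Definition app (c a : nat) : nat := ((c.-1 + a * k) %% n).+1.

Definition app_seq (c : nat) : seq nat := mkseq (app c) n.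

Definition rank (c j : nat) : nat := ((j.-1 + n - c.-1) * m) %% n.

Lemma nth_app_seq c a : a < n -> nth 0 (app_seq c) a = app c a.
Proof. exact: nth_mkseq. Qed.

Lemma size_app_seq c : size (app_seq c) = n.
Proof. exact: size_mkseq. Qed.

Lemma app_range c a : 0 < app c a <= n.
Proof. by rewrite /app ltn_mod; lia. Qed.

Lemma app0 c : 0 < c <= n -> app c 0 = c.
Proof. by move=> Hc; rewrite /app mul0n addn0 modn_small; lia. Qed.

Lemma app_succ c a : app c a.+1 = Defs.modn1 (app c a + k) n.
Proof. by rewrite /Defs.modn1 /app addSn /= modnDml mulSnr addnA. Qed.

Lemma app_value c r j : 0 < j <= n -> c.-1 + r * k = j.-1 %[mod n] -> app c r = j.
Proof. by move=> Hj E; rewrite /app E modn_small; lia. Qed.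

(* Index n - m - t holds position c - 1 - t k (mod n), as m k = 1 (mod n). *)
Lemma app_at_neg_inverse c t j : m + t <= n -> 0 < j <= n ->
  j + t * k = c.-1 %[mod n] -> app c (n - m - t) = j.
Proof.
move=> Hmt Hj E; apply: app_value => //; apply/eqP.
rewrite -(eqn_modDr ((m + t) * k)) -addnA -mulnDl (_ : n - m - t + (m + t) = n); last lia.
rewrite mulnC addnC modnMDl mulnDl addnCA -modnDml mk_inv add1n -addSn prednK; last lia.
by rewrite E.
Qed.

Lemma app_start_inj c c' r : 0 < c <= n -> 0 < c' <= n -> app c r = app c' r -> c = c'.
Proof. by move=> Hc Hc' /succn_inj/eqP; rewrite eqn_modDr !modn_small; lia. Qed.

Lemma rank_lt c j : rank c j < n.
Proof. by rewrite /rank ltn_mod; lia. Qed.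

Lemma rank_app c a : 0 < c <= n -> a < n -> rank c (app c a) = a.
Proof.
move=> Hc Ha; rewrite /rank /app /=.
set Y := (c.-1 + a * k) %% n.
have dist : Y + n - c.-1 = a * k %[mod n].
  apply/eqP; rewrite -(eqn_modDr c.-1) (_ : Y + n - c.-1 + c.-1 = Y + n); last lia.
  by rewrite modnDr /Y modn_mod addnC.
by rewrite -modnMml dist modnMml -mulnA (mulnC k) -modnMmr mk_inv muln1 modn_small.
Qed.

Lemma app_rank c j : 0 < c <= n -> 0 < j <= n -> app c (rank c j) = j.
Proof.
move=> Hc Hj; apply: app_value => //.
rewrite /rank -modnDmr modnMml -mulnA -modnMmr mk_inv muln1 modnDmr.
by rewrite (_ : c.-1 + (j.-1 + n - c.-1) = j.-1 + n) ?modnDr; lia.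
Qed.

Lemma rank_eq c r j : 0 < c <= n -> r < n -> app c r = j -> rank c j = r.
Proof. by move=> Hc Hr <-; rewrite rank_app. Qed.

Lemma rank_start_inj c c' j : 0 < c <= n -> 0 < c' <= n -> 0 < j <= n ->
  rank c j = rank c' j -> c = c'.
Proof.
move=> Hc Hc' Hj E; apply: (app_start_inj c c' (rank c j)) => //.
by rewrite {2}E !app_rank.
Qed.

Lemma rank_succ c j : 0 < c <= n -> 0 < j -> rank c j.+1 = (rank c j + m) %% n.
Proof.
move=> Hc Hj; rewrite /rank modnDml.
by rewrite (_ : j.+1.-1 + n - c.-1 = (j.-1 + n - c.-1).+1) ?mulSnr //; lia.
Qed.

Lemma app_seq_perm c : 0 < c <= n -> perm_eq (app_seq c) (iota 1 n).
Proof.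
move=> Hc; apply: uniq_perm; rewrite ?iota_uniq //.
  rewrite map_inj_in_uniq ?iota_uniq // => a b; rewrite !mem_iota => Ha Hb E.
  by rewrite -(rank_app c a) // E rank_app.
move=> j; rewrite mem_iota; apply/idP/idP => [/mapP [a _ ->] | Hj].
  by have := app_range c a; lia.
rewrite -(app_rank c j) //; try lia.
by rewrite -nth_app_seq ?rank_lt // mem_nth // size_app_seq rank_lt.
Qed.

Lemma app_seq_APP c : 0 < c <= n -> 0 < k < n -> is_APP n k (app_seq c).
Proof.
move=> Hc Hk; split; [exact: app_seq_perm | lia |].
by move=> i Hi; rewrite !nth_app_seq 1?app_succ //; lia.
Qed.

Lemma APP_app_seq p : is_APP n k p -> 0 < nth 0 p 0 <= n /\ p = app_seq (nth 0 p 0).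
Proof.
move=> [p_perm _ p_step].
have size_p : size p = n by rewrite (perm_size p_perm) size_iota.
have Hc : 0 < nth 0 p 0 <= n.
  have : nth 0 p 0 \in iota 1 n by rewrite -(perm_mem p_perm) mem_nth // size_p; lia.
  by rewrite mem_iota; lia.
split=> //; apply: (@eq_from_nth _ 0); rewrite size_p ?size_app_seq // => i Hi.
rewrite nth_app_seq //; elim: i Hi => [|i IH] Hi; first by rewrite app0.
by rewrite p_step // IH ?app_succ //; lia.
Qed.

Lemma app_prev c r : 0 < r -> k < n -> app c r <= k -> app c r.-1 = app c r + (n - k).
Proof.
move=> Hr Hk; have := app_succ c r.-1; rewrite (ltn_predK Hr) /Defs.modn1 => ->.
have := app_range c r.-1; set x := app c r.-1 => Hx.
rewrite (_ : (x + k).-1 = x.-1 + k); last lia.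
have [small|large] := ltnP (x.-1 + k) n; first by rewrite modn_small; lia.
by rewrite (_ : x.-1 + k = (x.-1 + k - n) + n) ?modnDr ?modn_small; lia.
Qed.

Lemma app_eq_last c a : 0 < c <= n -> a < n -> (app c a = n) <-> (a = rank c n).
Proof.
move=> Hc Ha; split=> [<- | ->]; first by rewrite rank_app.
by rewrite app_rank //; lia.
Qed.

Lemma app_seq_successorP T c : 0 < c <= n -> size T = n ->
  suffixes_sorted T (app_seq c) <-> successor_condition n T (app_seq c) (rank c).
Proof.
move=> Hc size_T; apply: sorted_successorP; rewrite ?size_app_seq //.
- by move=> a Ha; rewrite nth_app_seq ?app_range.
- by move=> a Ha; rewrite nth_app_seq ?rank_app.
- by move=> j Hj; rewrite nth_app_seq ?rank_lt ?app_rank.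
Qed.

Lemma ab_letter c s j : 0 < c <= n -> 0 < j <= n ->
  letter (ab_string n (app_seq c) s) j = (s <= rank c j).
Proof.
move=> Hc Hj; rewrite /letter /ab_string nth_mkseq; last lia.
have uniq_app : uniq (app_seq c) by rewrite (perm_uniq (app_seq_perm c Hc)) iota_uniq.
have j_app : j \in app_seq c.
  by rewrite -(app_rank c j) // -nth_app_seq ?rank_lt // mem_nth ?size_app_seq ?rank_lt.
rewrite prednK; last lia.
have index_j : index j (app_seq c) = rank c j.
  rewrite -{1}(app_rank c j) // -nth_app_seq ?rank_lt //.
  by rewrite index_uniq ?size_app_seq ?rank_lt.
by rewrite in_take // index_j -leqNgt.
Qed.

Lemma ab_string_of_SA T c : 0 < c <= n -> size T = n -> is_SA T (app_seq c) ->
  exists s, T = ab_string n (app_seq c) s.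
Proof.
move=> Hc size_T [_ /sorted_suffixesP /(app_seq_successorP T c Hc size_T) succ_T].
have [s Hs] := @monotone_threshold n _ (fun a b Hab => implyP (succ_T a b Hab).1).
exists s; apply: (@eq_from_nth _ false); rewrite size_T ?size_mkseq // => u Hu.
change (letter T u.+1 = letter (ab_string n (app_seq c) s) u.+1).
by rewrite ab_letter -?Hs ?rank_lt // ?nth_app_seq ?rank_lt // app_rank //; lia.
Qed.

Lemma ab_SA_iff c s : 0 < c <= n ->
  is_SA (ab_string n (app_seq c) s) (app_seq c) <-> sorted_threshold n m s (rank c n).
Proof.
move=> Hc; set T := ab_string n (app_seq c) s.
have size_T : size T = n by rewrite size_mkseq.
suff succ_iff : successor_condition n T (app_seq c) (rank c) <->
                 sorted_threshold n m s (rank c n).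
  apply: iff_trans succ_iff; apply: iff_trans (app_seq_successorP T c Hc size_T).
  rewrite /is_SA size_T; split=> [[_ /sorted_suffixesP] // | /sorted_suffixesP].
  by split=> //; exact: app_seq_perm.
have letterT a : a < n -> letter T (nth 0 (app_seq c) a) = (s <= a).
  by move=> Ha; rewrite nth_app_seq // ab_letter ?rank_app ?app_range.
have next_rank a : a < n -> app c a <> n -> rank c (app c a).+1 = (a + m) %% n.
  by move=> Ha Han; rewrite rank_succ ?rank_app ?app_range.
have last_iff a : a < n -> (app c a = n) <-> (a = rank c n) := app_eq_last c a Hc.
split=> succ_T a b Hab; have [Ha Hb] : a < n /\ b < n by lia.
  move=> Es; have [_ same] := succ_T a b Hab.
  rewrite !letterT // !nth_app_seq // in same; have [Hbn next_lt] := same Es.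
  split=> [Eb | Ean]; first by apply: Hbn; apply/(last_iff b Hb).
  have Han : app c a <> n by move/(last_iff a Ha).
  by rewrite -(next_rank a) // -(next_rank b) //; apply: next_lt.
rewrite !letterT // !nth_app_seq //; split=> [|Es]; first by apply/implyP; lia.
have [Hb_nu next_lt] := succ_T a b Hab Es.
split=> [/(last_iff b Hb) // | Han].
rewrite !next_rank //; last by move/(last_iff b Hb).
by apply: next_lt => /(last_iff a Ha).
Qed.

(* Period n - k: for j <= k, the position j + n - k sits one index before
   j, so both carry the same letter unless j sits at index 0 or s. *)
Lemma ab_period c s : 0 < c <= n -> 0 < k < n -> k < c -> k < app c s ->
  has_period (ab_string n (app_seq c) s) (n - k).
Proof.
move=> Hc Hk c_gt_k app_s_gt_k; rewrite /has_period size_mkseq; split=> [|i Hi]; first lia.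
change (letter (ab_string n (app_seq c) s) i.+1 =
        letter (ab_string n (app_seq c) s) (i.+1 + (n - k))).
have Hj : 0 < i.+1 <= n by lia.
rewrite !ab_letter //; try lia.
set r := rank c i.+1; have app_r : app c r = i.+1 by exact: app_rank.
have r_gt0 : 0 < r by case: r app_r => [|r'] //; rewrite app0 //; lia.
have r_neq_s : r != s by apply: contraTneq app_s_gt_k => <-; lia.
have r_lt : r < n by exact: rank_lt.
by rewrite -app_r -app_prev ?app_r ?rank_app //; lia.
Qed.

Section ThreeStrings.
Hypothesis k_range : 0 < k <= n - 2.
Hypothesis m_range : 0 < m <= n - 2.

Definition string1 : seq bool := ab_string n (app_seq n) (n - m).
Definition string2 : seq bool := ab_string n (app_seq (k + 1)) (n - m - 1).
Definition string3 : seq bool := ab_string n (app_seq 1) (n - m).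

Lemma app_last2 : app (k + 1) (n - m - 1) = n.
Proof.
by apply: app_at_neg_inverse; [lia | lia | rewrite mul1n addnC modnDr addn1].
Qed.

Lemma app_last3 : app 1 (n - m) = n.
Proof.
rewrite -[n - m]subn0; apply: app_at_neg_inverse; [lia | lia |].
by rewrite mul0n addn0 modnn mod0n.
Qed.

Lemma rank_last1 : rank n n = 0.
Proof. by apply: rank_eq; [lia | lia | rewrite app0 //; lia]. Qed.

Lemma rank_last2 : rank (k + 1) n = n - m - 1.
Proof. by apply: rank_eq; [lia | lia | exact: app_last2]. Qed.

Lemma rank_last3 : rank 1 n = n - m.
Proof. by apply: rank_eq; [lia | lia | exact: app_last3]. Qed.

Lemma ab_SA_classification c s : 0 < c <= n ->
  is_SA (ab_string n (app_seq c) s) (app_seq c) <->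
  [\/ c = n /\ s = n - m, c = k + 1 /\ s = n - m - 1 | c = 1 /\ s = n - m].
Proof.
move=> Hc; apply: iff_trans (ab_SA_iff c s Hc) _.
apply: iff_trans (sorted_thresholdP _ _ s _ (rank_lt c n) m_range) _.
have start_of c' : 0 < c' <= n -> rank c n = rank c' n -> c = c'.
  by move=> Hc'; apply: rank_start_inj => //; lia.
split=> [[] [Ec ->]|[] [-> ->]].
- by constructor 1; split=> //; apply: start_of; rewrite ?rank_last1; lia.
- by constructor 2; split=> //; apply: start_of; rewrite ?rank_last2; lia.
- by constructor 3; split=> //; apply: start_of; rewrite ?rank_last3; lia.
- by constructor 1; rewrite rank_last1.
- by constructor 2; rewrite rank_last2.
- by constructor 3; rewrite rank_last3.
Qed.

Lemma SA_APP_strings T :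
  (size T = n /\ exists p, is_SA T p /\ is_APP n k p) <-> T \in [:: string1; string2; string3].
Proof.
split=> [[size_T [p [SA_T APP_p]]] | T_in].
  have [Hc p_app] := APP_app_seq p APP_p; rewrite p_app in SA_T.
  have [s T_ab] := ab_string_of_SA T _ Hc size_T SA_T; rewrite T_ab in SA_T *.
  rewrite !inE /string1 /string2 /string3.
  by case/(ab_SA_classification _ _ Hc): SA_T => -[-> ->]; rewrite eqxx ?orbT.
have start_ok c s : 0 < c <= n -> is_SA (ab_string n (app_seq c) s) (app_seq c) ->
    size (ab_string n (app_seq c) s) = n /\
    exists p, is_SA (ab_string n (app_seq c) s) p /\ is_APP n k p.
  move=> Hc SA_cs; split; first by rewrite size_mkseq.
  by exists (app_seq c); split=> //; apply: app_seq_APP; lia.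
move: T_in; rewrite !inE => /or3P [] /eqP ->; apply: start_ok; try lia.
- by apply/ab_SA_classification; [lia | constructor 1].
- by apply/ab_SA_classification; [lia | constructor 2].
- by apply/ab_SA_classification; [lia | constructor 3].
Qed.

Lemma string1_spec :
  (exists p s, [/\ is_SA string1 p, is_APP n k p, 1 <= s <= n - 1 & string1 = ab_string n p s]
               /\ (nth 0 p 0 = n /\ nth 0 p s.-1 = n - k - 1))
  /\ has_period string1 (n - k).
Proof.
have Hc : 0 < n <= n by lia.
have threshold_pos : app n (n - m) = n - 1.
  by rewrite -[n - m]subn0; apply: app_at_neg_inverse; [lia | lia | rewrite mul0n addn0 subn1].
have ps_pos : app n (n - m - 1) = n - k - 1.
  by apply: app_at_neg_inverse; [lia | lia | rewrite mul1n (_ : n - k - 1 + k = n.-1) //; lia].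
split; last by apply: ab_period => //; lia.
exists (app_seq n), (n - m); split; split=> //; try lia.
- by apply/ab_SA_classification => //; constructor 1.
- by apply: app_seq_APP; lia.
- by rewrite nth_app_seq ?app0; lia.
- by rewrite nth_app_seq (_ : (n - m).-1 = n - m - 1) ?ps_pos; lia.
Qed.

Lemma string2_spec :
  (exists p s, [/\ is_SA string2 p, is_APP n k p, 1 <= s <= n - 1 & string2 = ab_string n p s]
               /\ (nth 0 p 0 = k + 1 /\ nth 0 p s.-1 = n - k))
  /\ has_period string2 (n - k).
Proof.
have Hc : 0 < k + 1 <= n by lia.
have ps_pos : app (k + 1) (n - m - 2) = n - k.
  apply: app_at_neg_inverse; [lia | lia |].
  by rewrite (_ : n - k + 2 * k = 1 * n + (k + 1).-1) ?modnMDl //; lia.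
split; last by apply: ab_period; rewrite ?app_last2; lia.
exists (app_seq (k + 1)), (n - m - 1); split; split=> //; try lia.
- by apply/ab_SA_classification => //; constructor 2.
- by apply: app_seq_APP; lia.
- by rewrite nth_app_seq ?app0; lia.
- by rewrite nth_app_seq (_ : (n - m - 1).-1 = n - m - 2) ?ps_pos; lia.
Qed.

Lemma string3_spec :
  (exists p s, [/\ is_SA string3 p, is_APP n k p, 1 <= s <= n - 1 & string3 = ab_string n p s]
               /\ (nth 0 p 0 = 1 /\ nth 0 p s.-1 = n - k))
  /\ lyndon string3.
Proof.
have Hc : 0 < 1 <= n by lia.
have SA3 : is_SA string3 (app_seq 1) by apply/ab_SA_classification => //; constructor 3.
have ps_pos : app 1 (n - m - 1) = n - k.
  by apply: app_at_neg_inverse; [lia | lia | rewrite mul1n subnK ?modnn ?mod0n //; lia].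
split; last by apply: (lyndon_of_SA _ _ SA3); rewrite nth_app_seq ?app0; lia.
exists (app_seq 1), (n - m); split; split=> //; try lia.
- by apply: app_seq_APP; lia.
- by rewrite nth_app_seq ?app0; lia.
- by rewrite nth_app_seq (_ : (n - m).-1 = n - m - 1) ?ps_pos; lia.
Qed.

(* The strings differ in their last letter (1 vs 2, 3) or first letter (2 vs 3). *)
Lemma strings_uniq : uniq [:: string1; string2; string3].
Proof.
have rank_first2 : rank (k + 1) 1 = n - 1.
  apply: rank_eq; [lia | lia | apply: app_value; first lia].
  by rewrite (_ : (k + 1).-1 + (n - 1) * k = n * k) ?modnMr ?mod0n //; nia.
have rank_first3 : rank 1 1 = 0 by apply: rank_eq; rewrite ?app0; lia.
have L1n : letter string1 n = false by rewrite /string1 ab_letter ?rank_last1; lia.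
have L2n : letter string2 n by rewrite /string2 ab_letter ?rank_last2; lia.
have L3n : letter string3 n by rewrite /string3 ab_letter ?rank_last3; lia.
have L21 : letter string2 1 by rewrite /string2 ab_letter ?rank_first2; lia.
have L31 : letter string3 1 = false by rewrite /string3 ab_letter ?rank_first3; lia.
rewrite /= !inE !negb_or andbT -andbA; apply/and3P; split; apply/eqP => E.
- by move: L1n; rewrite E L2n.
- by move: L1n; rewrite E L3n.
- by move: L31; rewrite -E L21.
Qed.

End ThreeStrings.
End ArithmeticProgression.

Lemma modinv_exists n k : 1 < n -> coprime k n -> exists2 m, m < n & (m * k) %% n = 1.
Proof.
move=> Hn Hco; have [a a_lt] := Bezoutr k (ltnW Hn).
rewrite (eqP Hco) /dvdn => /eqP div_n.
have a_gt0 : 0 < a.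
  by case: (posnP a) div_n => // ->; rewrite mul0n addn0 modn_small //; lia.
exists (n - a); first lia.
have le_ak : a * k <= n * k by rewrite leq_mul2r ltnW ?orbT.
have : (n - a) * k + (1 + a * k) = k * n + 1 by rewrite mulnBl; lia.
by move/(congr1 (fun x => x %% n)); rewrite -modnDmr div_n addn0 modnMDl (modn_small Hn).
Qed.

(* The inverse of k in [1..n-2] lies in [1..n-2] (k = -1 iff m = -1). *)
Lemma modinv_range n k m : 0 < k <= n - 2 -> m < n -> (m * k) %% n = 1 -> 0 < m <= n - 2.
Proof.
move=> Hk Hm; have [->|m_pos] := posnP m; first by rewrite mul0n mod0n.
have [->|] := eqVneq m (n - 1); last lia.
rewrite (_ : (n - 1) * k = (k - 1) * n + (n - k)); last nia.
by rewrite modnMDl modn_small; lia.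
Qed.

Theorem theorem10 (n k : nat) :
  3 <= n -> 1 <= k <= n - 2 -> coprime k n ->
  exists T1 T2 T3 : seq bool,
    [/\ uniq [:: T1; T2; T3],
        (forall T : seq bool,
            (size T = n /\ exists p, is_SA T p /\ is_APP n k p)
            <-> T \in [:: T1; T2; T3]),
        (* case (1): p_1 = n, p_s = n-k-1, period n-k *)
        (exists p s, [/\ is_SA T1 p, is_APP n k p, 1 <= s <= n - 1 &
                         T1 = ab_string n p s]
                     /\ (nth 0 p 0 = n /\ nth 0 p s.-1 = n - k - 1))
         /\ has_period T1 (n - k),
        (* case (2): p_1 = k+1, p_s = n-k, period n-k *)
        (exists p s, [/\ is_SA T2 p, is_APP n k p, 1 <= s <= n - 1 &
                         T2 = ab_string n p s]
                     /\ (nth 0 p 0 = k + 1 /\ nth 0 p s.-1 = n - k))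
         /\ has_period T2 (n - k) &
        (* case (3): p_1 = 1, p_s = n-k, Lyndon *)
        (exists p s, [/\ is_SA T3 p, is_APP n k p, 1 <= s <= n - 1 &
                         T3 = ab_string n p s]
                     /\ (nth 0 p 0 = 1 /\ nth 0 p s.-1 = n - k))
         /\ lyndon T3].
Proof.
move=> n_ge3 k_range coprime_kn.
have n_gt1 : 1 < n by lia.
have [m m_lt mk_inv] := modinv_exists n k n_gt1 coprime_kn.
have m_range := modinv_range n k m k_range m_lt mk_inv.
exists (string1 n k m), (string2 n k m), (string3 n k m); split.
- exact: strings_uniq.
- exact: SA_APP_strings.
- exact: string1_spec.
- exact: string2_spec.
- exact: string3_spec.
Qed.
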